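(* Let $P$ be a finite poset and $\gamma\in\mathcal{U}_P^*$ with $\gamma\in(I^P_{\mathrm{comm}})^\perp$. Then $F_\gamma(\mathbf{x})$ is symmetric in $x_1,x_2,\dots$.
   Context: $\mathcal{U}_P=\mathbb{Z}\langle u_a:a\in P\rangle$ (noncommuting variables); $\mathcal{U}_P^*$ is the free $\mathbb{Z}$-module on words in the alphabet $P$, paired with $\mathcal{U}_P$ by $\langle \mathbf{u}_w, v\rangle=\delta_{vw}$ where $\mathbf{u}_w=u_{w_1}\cdots u_{w_n}$; for an ideal $I$, $I^\perp=\{\gamma:\langle z,\gamma\rangle=0\ \forall z\in I\}$. Write $a<_Pb$ for strict order. For $S\subseteq P$, $e^P_k(\mathbf{u}_S)=\sum u_{a_1}\cdots u_{a_k}$ over $a_1>_P\cdots>_Pa_k$ in $S$ ($e^P_0=1$, $e^P_k=0$ for $k<0$). $I^P_{\mathrm{comm}}$ is the ideal generated by $e^P_k(\mathbf{u}_S)e^P_\ell(\mathbf{u}_S)-e^P_\ell(\mathbf{u}_S)e^P_k(\mathbf{u}_S)$ over all $k,\ell$ and $S\subseteq P$. For a word $w$, $\mathrm{Des}_P(w)=\{i:w_{i+1}<_Pw_i\}$; $Q_D(\mathbf{x})=\sum x_{i_1}\cdots x_{i_n}$ over $i_1\le\cdots\le i_n$ with $i_j<i_{j+1}$ for $j\in D$. For $\gamma=\sum_w\gamma_w w$, $F_\gamma(\mathbf{x})=\sum_w\gamma_wQ_{\mathrm{Des}_P(w)}(\mathbf{x})$. *)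

From HB Require Import structures.
From mathcomp Require Import all_boot all_order all_algebra.
From mathcomp Require Import fingroup perm.
Set Implicit Arguments. Unset Strict Implicit. Unset Printing Implicit Defensive.
Import Order.TTheory GRing.Theory Num.Theory.
Local Open Scope ring_scope.

Section NCPoly.
Variables (d : Order.disp_t) (P : finPOrderType d).

(* Elements of U_P (and of U_P^* ) are represented as formal finite
   Z-linear combinations of words: lists of (coefficient, word). *)
Definition ncpoly := seq (int * seq P).

Definition pcoef (a : ncpoly) (w : seq P) : int := \sum_(p <- a | p.2 == w) p.1.

Definition pmul (x y : ncpoly) : ncpoly :=
  [seq (a.1 * b.1, a.2 ++ b.2) | a <- x, b <- y].

Definition pneg (x : ncpoly) : ncpoly := [seq (- a.1, a.2) | a <- x].

Definition pairing (z g : ncpoly) : int :=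
  \sum_(a <- z) \sum_(b <- g) a.1 * b.1 * (a.2 == b.2)%:R.

Inductive in_ideal (G : ncpoly -> Prop) : ncpoly -> Prop :=
| ideal_gen g : G g -> in_ideal G g
| ideal_zero : in_ideal G [::]
| ideal_add a b : in_ideal G a -> in_ideal G b -> in_ideal G (a ++ b)
| ideal_lmul x a : in_ideal G a -> in_ideal G (pmul x a)
| ideal_rmul a x : in_ideal G a -> in_ideal G (pmul a x)
| ideal_eq a b : in_ideal G a -> (forall w, pcoef a w = pcoef b w) ->
                 in_ideal G b.

Definition elemP (k : nat) (S : {set P}) : ncpoly :=
  map (fun t : k.-tuple P => (1%:Z, val t))
    (filter (fun t : k.-tuple P =>
       all (fun a => a \in S) t && sorted (fun a b => (b < a)%O) t)
       (enum {: k.-tuple P})).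

Definition Icomm_gen (z : ncpoly) : Prop :=
  exists (k l : nat) (S : {set P}),
    z = pmul (elemP k S) (elemP l S) ++ pneg (pmul (elemP l S) (elemP k S)).

Definition I_comm := in_ideal Icomm_gen.

Definition in_perp (I : ncpoly -> Prop) (g : ncpoly) : Prop :=
  forall z, I z -> pairing z g = 0.

(* 0-indexed descent: j (i.e. position j+1 in 1-indexed terms) is a descent
   of w iff w_{j+1} <_P w_j *)
Definition is_des (w : seq P) (j : nat) : bool :=
  if drop j w is a :: b :: _ then (b < a)%O else false.

(* Coefficient of the monomial x_1^{alpha 0} ... x_k^{alpha (k-1)} in
   Q_{Des_P(w)}(x): number of sequences i_1 <= ... <= i_n (n = |w|),
   strict at descents, with content alpha. Variables x_1..x_k are indexed
   by 'I_k (x_{m+1} <-> m). *)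
Definition Qcoef (w : seq P) (k : nat) (alpha : 'I_k -> nat) : nat :=
  #|[pred i : (size w).-tuple 'I_k |
      [forall j : 'I_(size w),
        (j.+1 < size w)%N ==>
          let a := nth 0%N (map val i) j in
          let b := nth 0%N (map val i) j.+1 in
          (a <= b)%N && (is_des w j ==> (a < b)%N)]
      && [forall m : 'I_k, count_mem m i == alpha m]]|.

(* coefficient of x_1^{alpha 0} ... x_k^{alpha (k-1)} in
   F_gamma = sum_w gamma_w Q_{Des_P(w)} *)
Definition Fcoef (g : ncpoly) (k : nat) (alpha : 'I_k -> nat) : int :=
  \sum_(p <- g) p.1 * (Qcoef p.2 alpha)%:Z.

(* F_gamma symmetric in x_1, x_2, ... : coefficients invariant under
   every permutation of variables (finitely supported permutations
   suffice, since each monomial involves finitely many variables) *)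
Definition F_symmetric (g : ncpoly) : Prop :=
  forall (k : nat) (alpha : 'I_k -> nat) (s : 'S_k),
    Fcoef g alpha = Fcoef g (fun m => alpha (s m)).

End NCPoly.

From mathcomp Require Import all_boot all_order all_algebra.
From mathcomp Require Import fingroup perm.
From mathcomp Require Import finmap.
From mathcomp.multinomials Require Import monalg.
From mathcomp Require Import zify.
Set Implicit Arguments. Unset Strict Implicit. Unset Printing Implicit Defensive.
Import Order.TTheory GRing.Theory Num.Theory.
Local Open Scope ring_scope.

(* We compute in the free associative algebra A = Z<u_a : a in P>, realised as
   the monoid algebra {malg int[fmonom P]}.  The map [toA] sends the list
   representation [ncpoly P] onto A; the image Jcomm of I_comm is a two-sided
   ideal of A, and the functional X |-> <X, gamma> vanishes on it.

   Let e_k = e^P_k(u_P) be the generators with S = P, and h_n the sum of all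
   words of length n without P-descents.
   1. The sign-reversing splitting of a word w into a strictly decreasing
      prefix and a descent-free suffix gives sum_k (-1)^k e_k h_{n-k} = 0,
      i.e. a recurrence expressing h_{n+1} through the e_k and the h_m, m <= n.
      Since the e_k commute modulo Jcomm, so do all h_n; this step is a purely
      ring-theoretic induction, proved for an arbitrary ideal of any ring.
   2. The coefficient of w in h_{alpha_1} ... h_{alpha_k} is 1 exactly when w
      cuts into consecutive descent-free blocks of lengths alpha_1, ..., alpha_k;
      this is also the coefficient of x^alpha in Q_{Des_P(w)}, because the only
      weakly increasing index sequence of content alpha is 1^alpha_1 2^alpha_2 ...
   Hence the coefficient of x^alpha in F_gamma is <h_{alpha_1}...h_{alpha_k}, gamma>;
   permuting alpha permutes the factors, which changes the product only by an
   element of Jcomm, so the coefficient is unchanged. *)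

Lemma cat_eqE (T : eqType) (u v w : seq T) :
  (u ++ v == w) = (u == take (size u) w) && (v == drop (size u) w).
Proof.
apply/eqP/andP => [<-|[/eqP u_w /eqP ->]]; last by rewrite {1}u_w cat_take_drop.
by rewrite take_size_cat // drop_size_cat.
Qed.

Lemma size_take_eq (T : Type) (s : seq T) n : (size (take n s) == n) = (n <= size s)%N.
Proof. by rewrite size_take; case: ifP => ?; apply/eqP/idP; lia. Qed.

Lemma size_split_eq (T : Type) (w : seq T) n k : (k <= n)%N ->
  ((size (take k.+1 w) == k.+1) && (size (drop k.+1 w) == n - k)%N) = (size w == n.+1).
Proof.
rewrite size_drop size_take => le_kn; case: ifP => /= ?;
  by apply/andP/eqP => [[/eqP ? /eqP ?]|?]; [lia | split; apply/eqP; lia].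
Qed.

Lemma mem_zip2 (S T : eqType) (s : seq S) (t : seq T) p : p \in zip s t -> p.2 \in t.
Proof.
elim: s t => [|a s IH] [|b t] //=; rewrite !in_cons => /orP[/eqP -> | /IH ->].
  by rewrite eqxx.
by rewrite orbT.
Qed.

Lemma sorted_catE (T : eqType) (e : rel T) s1 s2 :
  (forall p q, p \in s1 -> q \in s2 -> e p q) ->
  sorted e (s1 ++ s2) = sorted e s1 && sorted e s2.
Proof.
case: s1 => [|p s1] //= e12.
rewrite cat_path; case: s2 e12 => [|q s2] e12 /=; first by rewrite andbT.
by rewrite e12 ?mem_last ?mem_head.
Qed.

Lemma sorted_nseq (T : Type) (e : rel T) x n : e x x -> sorted e (nseq n x).
Proof. by move=> exx; case: n => //= n; elim: n => //= n ->; rewrite exx. Qed.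

Lemma perm_enum_perm (T : finType) (s : {perm T}) : perm_eq (enum T) (map s (enum T)).
Proof.
apply: uniq_perm; first exact: enum_uniq.
  by rewrite map_inj_uniq ?enum_uniq //; exact: perm_inj.
move=> x; rewrite mem_enum; apply/esym/mapP; exists (s^-1 x)%g; first by rewrite mem_enum.
by rewrite permKV.
Qed.

Lemma sumrMn_andl (R : nmodType) (I : finType) (c : bool) (x : I -> R) (b : I -> bool) :
  \sum_i x i *+ (c && b i) = (\sum_i x i *+ b i) *+ c.
Proof. by case: c; rewrite ?mulr1n ?mulr0n // big1 // => i _; rewrite mulr0n. Qed.

(* J is a two-sided ideal of R, described by closure properties (J need not
   be decidable, so the boolean ideals of the library do not apply). *)
Record ideal_pred (R : pzRingType) (J : R -> Prop) : Prop := IdealPred {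
  ideal0 : J 0;
  idealD : forall x y, J x -> J y -> J (x + y);
  idealMl : forall a x, J x -> J (a * x);
  idealMr : forall x a, J x -> J (x * a) }.

Section CommutationModuloIdeal.
Variables (R : pzRingType) (J : R -> Prop).
Hypothesis idJ : ideal_pred J.

Lemma ideal_sum (I : Type) (r : seq I) (F : I -> R) :
  (forall i, J (F i)) -> J (\sum_(i <- r) F i).
Proof. by move=> JF; apply: big_ind => //; [exact: (ideal0 idJ) | exact: (idealD idJ)]. Qed.

Definition commJ (x y : R) : Prop := J (x * y - y * x).

Lemma commJC x y : commJ x y -> commJ y x.
Proof. by move=> Jxy; rewrite /commJ -opprB -mulN1r; apply: (idealMl idJ). Qed.

Lemma commJ1 x : commJ x 1.
Proof. by rewrite /commJ mulr1 mul1r subrr; exact: (ideal0 idJ). Qed.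

Lemma commJM x y z : commJ x y -> commJ x z -> commJ x (y * z).
Proof.
move=> Jxy Jxz; rewrite /commJ.
have -> : x * (y * z) - y * z * x = (x * y - y * x) * z + y * (x * z - z * x).
  by rewrite mulrBl mulrBr !mulrA addrA subrK.
by apply: (idealD idJ); [apply: (idealMr idJ) | apply: (idealMl idJ)].
Qed.

Lemma commJ_sum x (I : Type) (r : seq I) (F : I -> R) :
  (forall i, commJ x (F i)) -> commJ x (\sum_(i <- r) F i).
Proof. by move=> JF; rewrite /commJ mulr_sumr mulr_suml -sumrB; exact: ideal_sum. Qed.

Lemma commJMz x y (c : int) : commJ x y -> commJ x (y *~ c).
Proof.
by move=> Jxy; rewrite /commJ mulrzAl mulrzAr -mulrzBl -mulrzr; apply: (idealMr idJ).
Qed.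

Lemma commJ_prod x (I : Type) (r : seq I) (F : I -> R) :
  (forall i, commJ x (F i)) -> commJ x (\prod_(i <- r) F i).
Proof. by move=> JF; apply: big_ind => //; [exact: commJ1 | exact: commJM]. Qed.

Lemma perm_prodJ (I : eqType) (F : I -> R) (r r' : seq I) :
  (forall i j, commJ (F i) (F j)) -> perm_eq r r' ->
  J (\prod_(i <- r) F i - \prod_(i <- r') F i).
Proof.
move=> commF; elim: r r' => [|x r IH] r' r_r'.
  by rewrite -(size0nil (esym (perm_size r_r'))) subrr; exact: (ideal0 idJ).
have x_r' : x \in r' by rewrite -(perm_mem r_r') mem_head.
move: r_r'; case/splitPr: x_r' => l2 l3.
rewrite perm_sym -[x :: l3]cat1s perm_catCA /= perm_cons perm_sym => r_l.
have -> : \prod_(i <- x :: r) F i - \prod_(i <- l2 ++ x :: l3) F i =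
    F x * (\prod_(i <- r) F i - \prod_(i <- l2 ++ l3) F i) +
    (F x * \prod_(i <- l2) F i - \prod_(i <- l2) F i * F x) * \prod_(i <- l3) F i.
  rewrite big_cons !big_cat big_cons /=.
  by rewrite mulrBr mulrBl !mulrA addrA subrK.
apply: (idealD idJ); first by apply: (idealMl idJ); exact: IH.
by apply: (idealMr idJ); exact: commJ_prod.
Qed.

(* If h_0 = 1 and h_{n+1} = sum_{k <= n} (-1)^k e_{k+1} h_{n-k} (the relation
   between complete and elementary symmetric functions), and the e_i commute
   pairwise modulo J, then so do the h_n. *)
Section Recurrence.
Variables (e h : nat -> R).
Hypotheses (h0 : h 0 = 1)
  (hS : forall n, h n.+1 = \sum_(k < n.+1) (e k.+1 * h (n - k)%N) *~ ((-1) ^+ k))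
  (commJe : forall i j, commJ (e i) (e j)).

Lemma commJ_eh i n : commJ (e i) (h n).
Proof.
elim/ltn_ind: n => -[|n] IH; first by rewrite h0; exact: commJ1.
rewrite hS; apply: commJ_sum => k; apply/commJMz/commJM => //.
by apply: IH; rewrite ltnS leq_subr.
Qed.

Lemma commJ_hh m n : commJ (h m) (h n).
Proof.
elim/ltn_ind: m => -[|m] IH; first by rewrite h0; exact/commJC/commJ1.
apply: commJC; rewrite hS; apply: commJ_sum => k; apply/commJMz/commJM.
  exact/commJC/commJ_eh.
by apply/commJC/IH; rewrite ltnS leq_subr.
Qed.
End Recurrence.
End CommutationModuloIdeal.

Section FreeAlgebra.
Variables (d : Order.disp_t) (P : finPOrderType d).
Local Notation A := {malg int[fmonom P]}.

Definition coef (X : A) (w : seq P) : int := X@_(FMonom w).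

Lemma coef_inj (X Y : A) : (forall w, coef X w = coef Y w) -> X = Y.
Proof. by move=> XY; apply/malgP => m; rewrite -[m]fmK; exact: XY. Qed.

Lemma coefB X Y w : coef (X - Y) w = coef X w - coef Y w.
Proof. exact: mcoeffB. Qed.

Lemma coef_sum (I : Type) (r : seq I) (F : I -> A) w :
  coef (\sum_(i <- r) F i) w = \sum_(i <- r) coef (F i) w.
Proof. exact: raddf_sum. Qed.

Lemma coefMz X (c : int) w : coef (X *~ c) w = c * coef X w.
Proof. by rewrite /coef raddfMz -mulrzr intz mulrC. Qed.

Lemma coefU c u w : coef << c *g FMonom u >> w = c *+ (u == w).
Proof. by rewrite /coef mcoeffU fmP. Qed.

Lemma coef1 w : coef 1 w = (w == [::])%:R.
Proof. by rewrite /coef mcoeff1 fmP fm1. Qed.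

Lemma sum_msupp_delta (X : A) (F : int -> int) (m : fmonom P) : F 0 = 0 ->
  \sum_(k <- msupp X) F X@_k *+ (k == m) = F X@_m.
Proof.
move=> F0; have [Xm|Xm] := boolP (m \in msupp X).
  rewrite (big_fsetD1 m) //= eqxx mulr1n big_seq big1 ?addr0 // => k.
  by rewrite in_fsetD1 => /andP[/negPf -> _].
rewrite mcoeff_outdom // F0 big_seq big1 // => k Xk.
by case: eqP Xk Xm => [->->|].
Qed.

Lemma coefUM (c : int) (u : seq P) (X : A) w :
  coef (<< c *g FMonom u >> * X) w =
  if u == take (size u) w then c * coef X (drop (size u) w) else 0.
Proof.
rewrite /coef malgM_def fgmulUg raddf_sum /=.
under eq_bigr => m _ do rewrite mcoeffU fmP fmM /= cat_eqE.
case: ifP => _; last by rewrite big1 // => m _; rewrite andbF.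
rewrite -(@sum_msupp_delta X (fun y => c * y) _ (mulr0 c)).
by apply: eq_bigr => m _; rewrite fmP.
Qed.

Lemma coefM_hom (X Y : A) k w : (forall u, size u != k -> coef X u = 0) ->
  coef (X * Y) w = coef X (take k w) * coef Y (drop k w).
Proof.
move=> homX; rewrite {1}[X]monalgE mulr_suml coef_sum.
have term m : coef (<< X@_m *g m >> * Y) w =
    X@_m *+ (m == FMonom (take k w)) * coef Y (drop k w).
  rewrite -[m in << _ *g m >>]fmK coefUM.
  have [<-|km] := eqVneq (size m) k.
    by rewrite fmP eq_sym; case: (take _ _ == _); rewrite ?mulr1n ?mul0r.
  by have := homX m km; rewrite /coef fmK => ->; rewrite !(mul0r, mul0rn) if_same.
by rewrite (eq_bigr _ (fun m _ => term m)) -mulr_suml (@sum_msupp_delta X id).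
Qed.

Definition toA (z : ncpoly P) : A := \sum_(a <- z) << a.1 *g FMonom a.2 >>.

Lemma coef_toA z w : coef (toA z) w = pcoef z w.
Proof.
rewrite coef_sum /pcoef [RHS]big_mkcond /=; apply: eq_bigr => a _.
by rewrite coefU; case: (a.2 == w).
Qed.

Lemma toA_cat x y : toA (x ++ y) = toA x + toA y.
Proof. by rewrite /toA big_cat. Qed.

Lemma toA_pneg x : toA (pneg x) = - toA x.
Proof. by rewrite /toA big_map -sumrN; apply: eq_bigr => a _; rewrite monalgUN. Qed.

Lemma toA_pmul x y : toA (pmul x y) = toA x * toA y.
Proof.
rewrite /toA big_allpairs_dep mulr_suml; apply: eq_bigr => a _.
rewrite mulr_sumr; apply: eq_bigr => b _.
by rewrite malgM_def fgmulUU /= /mmul /= fmmulE.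
Qed.

Lemma toA_surj (X : A) : exists z, toA z = X.
Proof.
exists [seq (X@_m, val m) | m <- msupp X].
by rewrite /toA big_map [RHS]monalgE; apply: eq_bigr => m _; rewrite fmK.
Qed.

(* The image of I_comm in A; it is an ideal because toA is a surjective ring map. *)
Definition Jcomm (X : A) : Prop := exists2 z, I_comm z & toA z = X.

Lemma Jcomm_ideal : ideal_pred Jcomm.
Proof.
split.
- by exists [::]; [exact: ideal_zero | rewrite /toA big_nil].
- move=> _ _ [x Ix <-] [y Iy <-]; exists (x ++ y); last exact: toA_cat.
  exact: ideal_add.
- move=> M _ [x Ix <-]; have [m <-] := toA_surj M.
  by exists (pmul m x); [exact: ideal_lmul | exact: toA_pmul].
- move=> _ M [x Ix <-]; have [m <-] := toA_surj M.
  by exists (pmul x m); [exact: ideal_rmul | exact: toA_pmul].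
Qed.

Definition pairing_with (g : ncpoly P) (X : A) : int :=
  \sum_(b <- g) b.1 * coef X b.2.

Lemma pairing_withB g X Y :
  pairing_with g (X - Y) = pairing_with g X - pairing_with g Y.
Proof. by rewrite /pairing_with -sumrB; apply: eq_bigr => b _; rewrite coefB mulrBr. Qed.

Lemma pairing_with_toA g z : pairing_with g (toA z) = pairing z g.
Proof.
rewrite /pairing_with /pairing exchange_big /=; apply: eq_bigr => b _.
rewrite coef_toA /pcoef mulr_sumr big_mkcond /=; apply: eq_bigr => a _.
by case: eqP => _; rewrite ?mulr1 ?mulr0 // mulrC.
Qed.

Lemma pairing_with_Jcomm g X :
  in_perp (@I_comm d P) g -> Jcomm X -> pairing_with g X = 0.
Proof. by move=> perp_g [z Iz <-]; rewrite pairing_with_toA; exact: perp_g. Qed.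
End FreeAlgebra.

Section Words.
Variables (d : Order.disp_t) (P : finPOrderType d).
Local Notation A := {malg int[fmonom P]}.

Definition no_des (s : seq P) : bool := sorted (fun a b => ~~ (b < a)%O) s.
Definition strict_dec (s : seq P) : bool := sorted (fun a b => (b < a)%O) s.

Definition alt_split (w : seq P) : int :=
  \sum_(k < (size w).+1) (-1) ^+ k *+ (strict_dec (take k w) && no_des (drop k w)).

Lemma alt_split_cons a w : alt_split (a :: w) = (no_des (a :: w))%:R -
  \sum_(k < (size w).+1) (-1) ^+ k *+ (strict_dec (a :: take k w) && no_des (drop k w)).
Proof.
rewrite /alt_split big_ord_recl -sumrN; congr (_ + _).
by apply: eq_bigr => k _; rewrite lift0 exprS mulN1r mulNrn.
Qed.

(* Such cuts cancel in pairs: moving the last letter of the prefix to the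
   suffix, or back, changes the sign.  Proved by induction on w. *)
Lemma alt_split_eq0 w : w != [::] -> alt_split w = 0.
Proof.
elim: w => [//|a [|b w] IH] _; first by rewrite alt_split_cons big_ord_recl big_ord0.
move/(_ isT): IH; rewrite {1}/alt_split big_ord_recl take0 drop0 expr0.
set T := \sum_(i < _) _ => /eqP; rewrite addrC addr_eq0 => /eqP T_eq.
have dec_cons i : strict_dec (a :: take (lift ord0 i) (b :: w)) =
    (b < a)%O && strict_dec (take (lift ord0 i) (b :: w)) by [].
rewrite alt_split_cons big_ord_recl take0 drop0 expr0.
under eq_bigr => i _ do rewrite dec_cons -andbA.
rewrite sumrMn_andl -/T T_eq.
have -> : no_des [:: a, b & w] = ~~ (b < a)%O && no_des (b :: w) by [].
by case: (b < a)%O; case: (no_des _) => /=;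
  rewrite ?(mulr1n, mulr0n, subrr, addrN, opprK, addr0, add0r, oppr0).
Qed.

Definition words_with (k : nat) (p : pred (seq P)) : ncpoly P :=
  map (fun t : k.-tuple P => (1%:Z, val t))
    (filter (fun t : k.-tuple P => p (val t)) (enum {: k.-tuple P})).

Lemma pcoef_words_with k p w : pcoef (words_with k p) w = ((size w == k) && p w)%:R.
Proof.
rewrite /pcoef /words_with big_map big_filter_cond /= big_enum_cond /=.
have [sz|sz] := eqVneq (size w) k; last first.
  by rewrite big_pred0 // => t; apply/andP => -[_ /eqP tw]; rewrite -tw size_tuple eqxx in sz.
case pw: (p w) => /=.
  rewrite (big_pred1 (Tuple (introT eqP sz))) // => t /=.
  by rewrite -val_eqE /=; case: eqP => [->|]; rewrite ?pw ?andbF.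
by rewrite big_pred0 // => t /=; case: eqP => [->|]; rewrite ?pw ?andbF.
Qed.

Definition elemA (k : nat) : A := toA (elemP k [set: P]).
Definition homA (n : nat) : A := toA (words_with n no_des).

Lemma coef_elemA k w : coef (elemA k) w = ((size w == k) && strict_dec w)%:R.
Proof.
rewrite /elemA coef_toA.
have -> : elemP k [set: P] = words_with k (fun s => all (mem [set: P]) s && strict_dec s).
  by [].
rewrite pcoef_words_with (_ : all _ w = true) //.
by apply/allP => a _; exact: in_setT.
Qed.

Lemma coef_homA n w : coef (homA n) w = ((size w == n) && no_des w)%:R.
Proof. by rewrite coef_toA pcoef_words_with. Qed.

(* The e_k commute modulo Jcomm: their commutators are generators of I_comm. *)
Lemma elemA_comm k l : commJ (@Jcomm d P) (elemA k) (elemA l).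
Proof.
exists (pmul (elemP k [set: P]) (elemP l [set: P]) ++
        pneg (pmul (elemP l [set: P]) (elemP k [set: P]))).
  by apply: ideal_gen; exists k, l, [set: P].
by rewrite toA_cat toA_pneg !toA_pmul.
Qed.

Lemma homA0 : homA 0 = 1.
Proof. by apply: coef_inj => w; rewrite coef_homA coef1 size_eq0; case: w. Qed.

(* h_{n+1} = sum_{k <= n} (-1)^k e_{k+1} h_{n-k}: on each word w of length n+1
   this is the vanishing of alt_split w. *)
Lemma homA_rec n :
  homA n.+1 = \sum_(k < n.+1) (elemA k.+1 * homA (n - k)%N) *~ ((-1) ^+ k).
Proof.
apply: coef_inj => w; rewrite coef_homA coef_sum.
have term (k : 'I_n.+1) : coef ((elemA k.+1 * homA (n - k)%N) *~ ((-1) ^+ k)) w =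
    (size w == n.+1)%:R * ((-1) ^+ k *+ (strict_dec (take k.+1 w) && no_des (drop k.+1 w))).
  rewrite coefMz (@coefM_hom _ _ _ _ k.+1) => [|u]; last by rewrite coef_elemA => /negPf ->.
  rewrite coef_elemA coef_homA -natrM mulnb andbACA size_split_eq; last by rewrite -ltnS.
  by rewrite -mulnb natrM mulrCA mulr_natr.
rewrite (eq_bigr _ (fun k _ => term k)) -mulr_sumr.
have [sz|] := eqVneq (size w) n.+1; last by rewrite mul0r.
have /alt_split_eq0 : w != [::] by rewrite -size_eq0 sz.
rewrite /alt_split sz big_ord_recl take0 drop0 expr0 mul1r.
under eq_bigr => i _ do rewrite lift0 exprS mulN1r mulNrn.
by rewrite sumrN => /eqP; rewrite subr_eq0 => /eqP.
Qed.

Lemma homA_comm m n : commJ (@Jcomm d P) (homA m) (homA n).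
Proof. exact: (commJ_hh (@Jcomm_ideal d P) homA0 homA_rec elemA_comm). Qed.
End Words.

Section PPartitions.
Variables (d : Order.disp_t) (P : finPOrderType d).

Fixpoint no_des_blocks (w : seq P) (l : seq nat) : bool :=
  if l is a :: l' then
    [&& (a <= size w)%N, no_des (take a w) & no_des_blocks (drop a w) l']
  else w == [::].

Lemma coef_prod_homA l w :
  coef (\prod_(n <- l) homA P n) w = (no_des_blocks w l)%:R.
Proof.
elim: l w => [|a l IH] w; first by rewrite big_nil coef1.
rewrite big_cons (@coefM_hom _ _ _ _ a) => [|u]; last by rewrite coef_homA => /negPf ->.
by rewrite coef_homA IH -natrM mulnb size_take_eq -andbA.
Qed.

(* Adjacent entries (a, i), (b, j) of a P-partition: i <= j, and i < j when
   b <_P a, i.e. at a descent. *)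
Definition ppart_step : rel (P * nat) :=
  fun p q => (p.2 <= q.2)%N && ((q.1 < p.1)%O ==> (p.2 < q.2)%N).

Lemma is_desE (w : seq P) (a : P) j : (j.+1 < size w)%N ->
  is_des w j = (nth a w j.+1 < nth a w j)%O.
Proof.
move=> lt_j1w; rewrite /is_des (drop_nth a) ?(ltn_trans (ltnSn j) lt_j1w) //.
by rewrite (drop_nth a).
Qed.

Lemma descent_condE (w : seq P) (x : seq nat) : size x = size w ->
  [forall j : 'I_(size w), (j.+1 < size w)%N ==>
     (let a := nth 0%N x j in let b := nth 0%N x j.+1 in
      (a <= b)%N && (is_des w j ==> (a < b)%N))] = sorted ppart_step (zip w x).
Proof.
case: w => [|p w'] sz_x.
  by rewrite (size0nil sz_x); apply/forallP => -[].
apply/forallP/(sortedP (p, 0%N)) => cond.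
  move=> i; rewrite size_zip sz_x minnn => lt_i.
  have := cond (Ordinal (ltn_trans (ltnSn i) lt_i)); move/implyP/(_ lt_i).
  by rewrite !nth_zip ?sz_x // (is_desE p lt_i).
move=> j; apply/implyP => lt_j.
have := cond j; rewrite size_zip sz_x minnn => /(_ lt_j).
by rewrite !nth_zip ?sz_x // (is_desE p lt_j).
Qed.

Lemma ppart_const (u : seq P) (y : nat) :
  sorted ppart_step (zip u (nseq (size u) y)) = no_des u.
Proof.
have -> : zip u (nseq (size u) y) = map (fun b => (b, y)) u by elim: u => //= b u ->.
rewrite sorted_map; apply: eq_sorted => a b /=.
by rewrite /ppart_step /= leqnn ltnn implybF.
Qed.

Lemma ppart_sorted_values (w : seq P) (x : seq nat) :
  size x = size w -> sorted ppart_step (zip w x) -> sorted leq x.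
Proof.
move=> sz_x ppart_wx; rewrite -(unzip2_zip (eq_leq sz_x)) sorted_map.
by apply: sub_sorted ppart_wx => p q /andP[].
Qed.

Section Content.
Variables (k : nat) (al : 'I_k -> nat).
Local Notation ltI := (relpre (@nat_of_ord k) ltn).
Local Notation leI := (relpre (@nat_of_ord k) leq).

Lemma ltI_trans : transitive ltI.
Proof. by move=> y x z; apply: ltn_trans. Qed.

Definition content_seq (ms : seq 'I_k) : seq 'I_k :=
  flatten [seq nseq (al m) m | m <- ms].

Lemma mem_content_seq ms m : m \in content_seq ms -> m \in ms.
Proof. by move=> /flattenP[s /mapP[m' m'_ms ->]] /nseqP[-> _]. Qed.

Lemma sorted_content_seq ms : sorted ltI ms -> sorted leI (content_seq ms).
Proof.
elim: ms => [|m ms IH] //= sorted_ms.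
have lt_m := order_path_min ltI_trans sorted_ms.
rewrite sorted_catE; last first.
  move=> p q /nseqP[-> _] /mem_content_seq q_ms; exact/ltnW/(allP lt_m).
rewrite IH ?(path_sorted sorted_ms) // andbT; apply: sorted_nseq; exact: leqnn.
Qed.

Lemma ppart_content_seq ms w : sorted ltI ms ->
  (size (content_seq ms) == size w) &&
    sorted ppart_step (zip w (map val (content_seq ms)))
  = no_des_blocks w (map al ms).
Proof.
elim: ms w => [|m ms IH] w sorted_ms; first by rewrite /= eq_sym size_eq0; case: w.
have lt_m := order_path_min ltI_trans sorted_ms.
rewrite /content_seq /= -/(content_seq ms) map_cat size_cat size_nseq.
have [le_mw|lt_wm] := leqP (al m) (size w); last first.
  rewrite (_ : (al m + size (content_seq ms) == size w) = false) //.
  by apply/negbTE; rewrite neq_ltn (leq_trans lt_wm (leq_addr _ _)) orbT.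
rewrite -[in zip w _](cat_take_drop (al m) w) zip_cat; last first.
  by rewrite size_map size_nseq size_takel.
rewrite map_nseq sorted_catE; last first.
  move=> p q /mem_zip2 /nseqP[p2 _] /mem_zip2 /mapP[m' /mem_content_seq m'_ms q2].
  have lt_mm' : (m < m')%N by exact: (allP lt_m).
  by rewrite /ppart_step p2 q2 (ltnW lt_mm') lt_mm' implybT.
rewrite -[X in nseq X](size_takel le_mw) ppart_const -IH ?(path_sorted sorted_ms) //.
rewrite size_drop -[X in _ == X](subnK le_mw) addnC eqn_add2r.
by case: (_ == _); case: no_des.
Qed.

Definition content_word : seq 'I_k := content_seq (enum 'I_k).

Lemma count_content_seq m : count_mem m content_word = al m.
Proof.
rewrite /content_word /content_seq count_flatten -map_comp sumnE big_map big_enum /=.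
rewrite (bigD1 m) //= count_nseq /= eqxx mul1n big1 ?addn0 // => m' ne_m'm.
by rewrite count_nseq /= (negbTE ne_m'm).
Qed.

Lemma sorted_enum_ord : sorted ltI (enum 'I_k).
Proof. by have := iota_ltn_sorted 0 k; rewrite -val_enum_ord sorted_map. Qed.

Lemma sorted_content_eq (s : seq 'I_k) :
  sorted leI s -> (forall m, count_mem m s = al m) -> s = content_word.
Proof.
move=> sorted_s count_s; apply: (sorted_eq (leT := leI)) => //.
- by move=> a b c; apply: leq_trans.
- by move=> a b /anti_leq /val_inj.
- exact: (sorted_content_seq sorted_enum_ord).
by apply/allP => m _ /=; rewrite count_content_seq count_s.
Qed.

(* A sequence of indices compatible with the descents of w and of content al
   is necessarily the weakly increasing content_word, which is compatible with
   w exactly when w cuts into descent-free blocks of lengths al. *)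
Lemma ppart_contentE w (x : seq 'I_k) : size x = size w ->
  sorted ppart_step (zip w (map val x)) && [forall m, count_mem m x == al m]
  = (x == content_word) && no_des_blocks w (map al (enum 'I_k)).
Proof.
move=> sz_x; rewrite -ppart_content_seq ?sorted_enum_ord // -/content_word.
apply/andP/andP => [[ppart_x /forallP count_x] | [/eqP-> /andP[_ ppart_c]]].
  have x_c : x = content_word.
    apply: sorted_content_eq => [|m]; last exact/eqP/count_x.
    by rewrite -sorted_map; apply: ppart_sorted_values ppart_x; rewrite size_map.
  by rewrite x_c eqxx -x_c sz_x eqxx.
by split=> //; apply/forallP => m; rewrite count_content_seq.
Qed.

Lemma Qcoef_blocks w : Qcoef w al = no_des_blocks w (map al (enum 'I_k)).
Proof.
rewrite /Qcoef (@eq_card _ _ [pred i : (size w).-tuple 'I_k |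
    (val i == content_word) && no_des_blocks w (map al (enum 'I_k))]); last first.
  move=> i; rewrite !inE descent_condE ?size_map ?size_tuple //.
  by rewrite ppart_contentE ?size_tuple.
case blocks: (no_des_blocks w _); last by rewrite eq_card0 // => i; rewrite !inE andbF.
have sz_c : size content_word == size w.
  by move: blocks; rewrite -ppart_content_seq ?sorted_enum_ord // => /andP[].
apply: (@eq_card1 _ (Tuple sz_c)) => i.
by rewrite !inE andbT -val_eqE.
Qed.
End Content.
End PPartitions.

Lemma Fcoef_prod_homA (d : Order.disp_t) (P : finPOrderType d)
    (g : ncpoly P) k (al : 'I_k -> nat) :
  Fcoef g al = pairing_with g (\prod_(n <- map al (enum 'I_k)) homA P n).
Proof.
rewrite /Fcoef /pairing_with; apply: eq_bigr => b _.
by rewrite coef_prod_homA -Qcoef_blocks natz.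
Qed.

Theorem mainTheorem4 (d : Order.disp_t) (P : finPOrderType d)
  (gamma : ncpoly P) :
  in_perp (@I_comm d P) gamma -> F_symmetric gamma.
Proof.
move=> perp_gamma k al s; rewrite !Fcoef_prod_homA.
apply/eqP; rewrite -subr_eq0 -pairing_withB; apply/eqP.
apply: pairing_with_Jcomm perp_gamma _.
apply: (perm_prodJ (@Jcomm_ideal d P) (@homA_comm d P)).
by rewrite (map_comp al s) perm_map // perm_enum_perm.
Qed.
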